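(* Let $P$ satisfy (S1)–(S4). If $\bar h\in H$ has support of size at least $4$, then $\bar h$ is a $[\pm,t]$-commutator.
   Context: Conditions on a finite group $P$: (S1) for all $a_1,a_2\in P$ there are $x,y$ with $a_2=x^{-1}a_1^{-1}yxy^{-1}$; (S2) for all $a_1,a_2,a_3$ there are $u,v$ with $a_2=a_3ua_1^{-1}a_3^{-1}vu^{-1}v^{-1}$; (S3) for all $u_1,u_2,u_3,u_4\ne1$ there are $x,y,z$ with $u_4=x^{-1}u_1xy^{-1}u_2yz^{-1}u_3z$; (S4) there are $u_1,u_2,u_3\ne1$ such that there are no $x,y$ with $u_3=x^{-1}u_2^{-1}xy^{-1}u_1^{-1}y$. $H=\bigoplus_{i\in\mathbb Z}H_i$, each $H_i$ a copy of $P$, elements finitely supported sequences $(h_i)_{i\in\mathbb Z}$; the support of $\bar h$ is $\{i:h_i\ne1\}$. $\alpha((h_i)_i)=(h_{i+1})_i$. $\bar h\in H$ is a $[\pm,t]$-commutator if $\bar h=\bar g_1\alpha(\bar g_1^{-1})\alpha(\bar g_2)\bar g_2^{-1}$ or $\bar h=\alpha(\bar g_1)\bar g_1^{-1}\bar g_2\alpha(\bar g_2^{-1})$ for some $\bar g_1,\bar g_2\in H$. *)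

(* P is modelled as the whole carrier of gT : finGroupType. *)
From mathcomp Require Import all_boot all_algebra all_fingroup.
Set Implicit Arguments. Unset Strict Implicit. Unset Printing Implicit Defensive.
Local Open Scope group_scope.

Definition S1 (gT : finGroupType) : Prop :=
  forall a1 a2 : gT, exists x y : gT, a2 = x^-1 * a1^-1 * y * x * y^-1.
Definition S2 (gT : finGroupType) : Prop :=
  forall a1 a2 a3 : gT, exists u v : gT,
    a2 = a3 * u * a1^-1 * a3^-1 * v * u^-1 * v^-1.
Definition S3 (gT : finGroupType) : Prop :=
  forall u1 u2 u3 u4 : gT, u1 != 1 -> u2 != 1 -> u3 != 1 -> u4 != 1 ->
    exists x y z : gT, u4 = x^-1 * u1 * x * (y^-1 * u2 * y) * (z^-1 * u3 * z).
Definition S4 (gT : finGroupType) : Prop :=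
  exists u1 u2 u3 : gT, [/\ u1 != 1, u2 != 1, u3 != 1 &
    ~ exists x y : gT, u3 = x^-1 * u2^-1 * x * (y^-1 * u1^-1 * y)].

(* Elements of H = (+)_{i in Z} P : finitely supported maps int -> gT,
   with pointwise group operations. *)
Definition fin_supp (gT : finGroupType) (h : int -> gT) : Prop :=
  exists s : seq int, forall i, h i != 1 -> i \in s.

Definition alpha (gT : finGroupType) (h : int -> gT) : int -> gT :=
  fun i => h (i + 1)%R.

Definition supp_size_ge (gT : finGroupType) (h : int -> gT) (n : nat) : Prop :=
  exists s : seq int, [/\ uniq s, (n <= size s)%N & forall i, i \in s -> h i != 1].

Definition pm_t_commutator (gT : finGroupType) (h : int -> gT) : Prop :=
  exists g1 g2 : int -> gT, [/\ fin_supp g1, fin_supp g2 &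
    (forall i, h i = g1 i * (alpha g1 i)^-1 * alpha g2 i * (g2 i)^-1) \/
    (forall i, h i = alpha g1 i * (g1 i)^-1 * g2 i * (alpha g2 i)^-1)].

(* (S1) with a1 = 1 makes every element of P a commutator, and by (S3) a
   nontrivial central u would force every element to be 1 or u^3; so no
   nontrivial element is central.  Hence, by (S3) and induction, every
   nontrivial element is a product of conjugates of any three or more given
   nontrivial elements in a fixed order, and with four or more factors so is 1.
   Apply this to the h_j^-1 along the support of h in increasing order to get
   conjugators a_j.  If c_i is the product of the factors (h_j^-1)^(a_j) with
   j >= i, then c is trivial below and above the support, and g1 := a,
   g2 := a * c work, because g1_i g1_(i+1)^-1 g2_(i+1) g2_i^-1 telescopes to
   a_i c_(i+1) c_i^-1 a_i^-1. *)
From mathcomp Require Import all_boot all_order all_algebra all_fingroup.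
From mathcomp Require Import zify.
Set Implicit Arguments. Unset Strict Implicit. Unset Printing Implicit Defensive.
Import Order.TTheory.

Local Open Scope group_scope.

Section ConjugateProducts.
Variable gT : finGroupType.

Lemma S1_abelian_trivial : S1 gT -> (forall x y : gT, commute x y) ->
  forall u : gT, u = 1.
Proof.
move=> S1P cP u; have [x [y ->]] := S1P 1 u.
by rewrite invg1 mulg1 -(mulgA _ y) (cP y x) mulgA mulVg mul1g mulgV.
Qed.

Lemma S3_central_abelian (u : gT) : S3 gT -> u != 1 -> (forall y, u ^ y = u) ->
  forall x y : gT, commute x y.
Proof.
move=> S3P nt_u cu.
have u3P (g : gT) : g = 1 \/ g = u * u * u.
  have [-> | nt_g] := eqVneq g 1; [by left | right].
  have [x [y [z ->]]] := S3P u u u g nt_u nt_u nt_u nt_g.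
  have cu' a : a^-1 * u * a = u by rewrite -mulgA -conjgE cu.
  by rewrite !cu'.
by move=> x y; case: (u3P x) => ->; case: (u3P y) => ->; rewrite /commute ?mul1g ?mulg1.
Qed.

Lemma S1_S3_noncentral (u : gT) : S1 gT -> S3 gT -> u != 1 ->
  exists y, u ^ y != u.
Proof.
move=> S1P S3P nt_u; have [/existsP [y]|] := boolP [exists y, u ^ y != u].
  by exists y.
rewrite negb_exists => /forallP cu.
have cP := S3_central_abelian S3P nt_u (fun y => eqP (negbNE (cu y))).
by move: nt_u; rewrite (S1_abelian_trivial S1P cP u) eqxx.
Qed.

Lemma S1_S3_conj_avoid (w t : gT) : S1 gT -> S3 gT -> w != 1 ->
  exists y, w ^ y != t.
Proof.
move=> S1P S3P nt_w; have [<- | ne_wt] := eqVneq w t; last first.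
  by exists 1; rewrite conjg1.
exact: S1_S3_noncentral.
Qed.

Variables (I : eqType) (w : I -> gT).

Definition conj_prod (r : seq I) (a : I -> gT) := \prod_(j <- r) w j ^ a j.

Definition conj_prod_onto (r : seq I) (T : pred gT) :=
  forall t, T t -> exists a, conj_prod r a = t.

Lemma conj_prod_update (r : seq I) (a : I -> gT) x y : x \notin r ->
  conj_prod r (fun j => if j == x then y else a j) = conj_prod r a.
Proof.
move=> xNr; apply: eq_big_seq => j jr.
by case: eqP => // ejx; rewrite -ejx jr in xNr.
Qed.

Hypotheses (S1P : S1 gT) (S3P : S3 gT).

Lemma conj_prod_onto_cons x (r : seq I) : x \notin r -> w x != 1 ->
  conj_prod_onto r (fun t => t != 1) -> conj_prod_onto (x :: r) predT.
Proof.
move=> xNr nt_wx onto_r t _; have [y ne_wt] := S1_S3_conj_avoid t S1P S3P nt_wx.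
have nt_t' : (w x ^ y)^-1 * t != 1.
  by apply: contra ne_wt; rewrite -eq_invg_mul invgK => /eqP ->.
have [a prod_a] := onto_r _ nt_t'.
exists (fun j => if j == x then y else a j).
by rewrite /conj_prod big_cons -/(conj_prod r _) conj_prod_update // prod_a eqxx mulKVg.
Qed.

Lemma conj_prod3_onto (r : seq I) : uniq r -> all (fun j => w j != 1) r ->
  3 <= size r -> conj_prod_onto r (fun t => t != 1).
Proof.
elim: r => [|x r IHr] //= /andP[xNr r_uniq] /andP[nt_wx nt_wr].
have [r3 _ | r2 r3] := leqP 3 (size r).
  by move=> t _; apply: (conj_prod_onto_cons xNr nt_wx (IHr r_uniq nt_wr r3)).
case: r {IHr} xNr r_uniq nt_wr r2 r3 => [|p [|q [|? ?]]] //= + + + _ _.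
rewrite !inE !andbT => /norP[xp xq] pq /andP[nt_wp nt_wq] t nt_t.
have [x1 [y1 [z1 ->]]] := S3P nt_wx nt_wp nt_wq nt_t.
exists (fun j => if j == x then x1 else if j == p then y1 else z1).
rewrite /conj_prod !big_cons big_nil mulg1 eqxx.
by rewrite ![_ == x]eq_sym (negbTE xp) (negbTE xq) eqxx eq_sym (negbTE pq) !conjgE !mulgA.
Qed.

Lemma conj_prod4_onto (r : seq I) : uniq r -> all (fun j => w j != 1) r ->
  4 <= size r -> conj_prod_onto r predT.
Proof.
case: r => [|x r] //= /andP[xNr r_uniq] /andP[nt_wx nt_wr] r3.
exact/conj_prod_onto_cons/conj_prod3_onto.
Qed.

End ConjugateProducts.

Lemma big_ge_recl (R : Type) (idx : R) (op : Monoid.law idx) (F : int -> R)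
    (r : seq int) (i : int) : sorted <%R r ->
  \big[op/idx]_(j <- r | (i <= j)%R) F j =
  op (if i \in r then F i else idx) (\big[op/idx]_(j <- r | (i + 1 <= j)%R) F j).
Proof.
elim: r => [|x r IHr] /= sorted_xr; first by rewrite !big_nil Monoid.mulm1.
have x_min : all (fun j => (x < j)%R) r by apply: order_path_min => //; apply: lt_trans.
rewrite !big_cons in_cons lezD1 IHr ?(path_sorted sorted_xr) //.
case: (ltgtP i x) => [ix | xi | eq_ix] //=.
  have iNr : i \notin r by apply: contraTN ix => /(allP x_min) /ltW; rewrite leNgt.
  by rewrite (negbTE iNr) !Monoid.mul1m.
have xNr : x \notin r by apply: contraTN isT => /(allP x_min); rewrite ltxx.
by rewrite eq_ix (negbTE xNr) Monoid.mul1m.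
Qed.

Section Telescoping.
Variable gT : finGroupType.
Implicit Types f g h : int -> gT.

Lemma fin_supp_bounded f (B : nat) :
  (forall j, f j != 1 -> (`|j| <= B)%N) -> fin_supp f.
Proof.
move=> f_bounded; exists [seq (Posz k - Posz B)%R | k <- iota 0 (B + B).+1].
move=> j /f_bounded; case: j => n le_nB; apply/mapP.
  by exists (B + n)%N; rewrite ?mem_iota; lia.
by exists (B - n.+1)%N; rewrite ?mem_iota ?NegzE; lia.
Qed.

Lemma fin_supp_mul f g : fin_supp f -> fin_supp g -> fin_supp (fun j => f j * g j).
Proof.
move=> [s fs] [s' gs]; exists (s ++ s') => j; rewrite mem_cat.
by have [-> | /fs -> //] := eqVneq (f j) 1; rewrite mul1g => /gs ->; rewrite orbT.
Qed.

Lemma fin_supp_sorted h : fin_supp h ->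
  exists2 r : seq int, sorted <%R r & forall j, (j \in r) = (h j != 1).
Proof.
move=> [s hs]; exists [seq j <- sort <=%R (undup s) | h j != 1].
  by apply: sorted_filter; [exact: lt_trans | rewrite sort_lt_sorted undup_uniq].
move=> j; rewrite mem_filter mem_sort mem_undup.
by case: (boolP (h j != 1)) => [/hs -> | _]; rewrite ?andbF.
Qed.

Lemma supp_size_ge_leq h (r : seq int) n : (forall j, (j \in r) = (h j != 1)) ->
  supp_size_ge h n -> (n <= size r)%N.
Proof.
move=> supp_r [s [s_uniq le_ns nt_hs]]; apply: leq_trans le_ns (uniq_leq_size s_uniq _).
by move=> j /nt_hs; rewrite supp_r.
Qed.

Lemma pm_t_commutator_of_conj_prod h (r : seq int) (a : int -> gT) :
  sorted <%R r -> (forall j, (j \in r) = (h j != 1)) ->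
  \prod_(j <- r) (h j)^-1 ^ a j = 1 -> pm_t_commutator h.
Proof.
move=> r_sorted supp_r prod_a.
pose g1 j := if j \in r then a j else 1.
pose c i := \prod_(j <- r | (i <= j)%R) (h j)^-1 ^ a j.
have c_rec i : c i = (if i \in r then (h i)^-1 ^ a i else 1) * c (i + 1)%R.
  exact: big_ge_recl.
have c_supp : fin_supp c.
  apply: (@fin_supp_bounded _ (\max_(j <- r) `|j|)) => i nt_ci.
  have [j1 j1r lt_j1i] : exists2 j1, j1 \in r & (j1 < i)%R.
    apply/hasP; apply: contraNT nt_ci => /hasPn ge_i.
    have /all_filterP all_ge : all (fun j => i <= j)%R r.
      by apply/allP => j /ge_i; rewrite -leNgt.
    by rewrite /c -big_filter all_ge prod_a.
  have [j2 j2r le_ij2] : exists2 j2, j2 \in r & (i <= j2)%R.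
    by apply/hasP; apply: contraNT nt_ci => no_ge; rewrite /c big_hasC.
  have := @leq_bigmax_seq _ r (fun _ => true) (fun j : int => `|j|) _ j1r isT.
  have := @leq_bigmax_seq _ r (fun _ => true) (fun j : int => `|j|) _ j2r isT.
  move: (\max_(_ <- r) _) => B; move: lt_j1i le_ij2; lia.
have g1_supp : fin_supp g1 by exists r => j; rewrite /g1; case: ifP => // _; rewrite eqxx.
exists g1, (fun j => g1 j * c j); split; [by [] | exact: fin_supp_mul |].
left => i; rewrite /alpha (c_rec i) !invMg !mulgA mulgKV mulgK /g1.
case: (boolP (i \in r)) => ir.
  by rewrite conjVg invgK conjgE !mulgA mulgV mul1g mulgK.
by move: ir; rewrite supp_r negbK => /eqP ->; rewrite mul1g invg1 mulg1.
Qed.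

End Telescoping.

Theorem lemma4p7 (gT : finGroupType) (h : int -> gT) :
  S1 gT -> S2 gT -> S3 gT -> S4 gT ->
  fin_supp h -> supp_size_ge h 4 -> pm_t_commutator h.
Proof.
move=> S1P _ S3P _ /fin_supp_sorted[r r_sorted supp_r] /(supp_size_ge_leq supp_r) size_r.
have r_uniq : uniq r by rewrite (sorted_uniq lt_trans ltxx).
have nt_r : all (fun j => (h j)^-1 != 1) r by apply/allP => j; rewrite supp_r invg_eq1.
have [a prod_a] := conj_prod4_onto S1P S3P r_uniq nt_r size_r (t := 1) isT.
exact: pm_t_commutator_of_conj_prod r_sorted supp_r prod_a.
Qed.
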